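(* For every $z\in\Omega_\theta$ the following hold: (a) $\|W\|_F^2\le \theta/\lambda_2$, $\|V\|_1\le \theta/\lambda_1$ and $\|b_+\|_\infty\le\alpha$, where $b_+=(b)_+$; (b) $\bar z=\mathrm{Proj}_{\Omega_3}(z)$ belongs to $\mathcal{Z}$ and $\mathcal{O}(\bar z)=\mathcal{O}(z)$. Moreover, the set $\mathcal{Z}^*$ of global minimizers of problem (LRP) is nonempty and bounded, and $\mathcal{Z}^*\subset\mathcal{S}$, where $\mathcal{S}$ is the set of global minimizers of problem (RP).
   Context: Let $N,N_0,N_1$ be positive integers, $X=(x_1,\ldots,x_N)\in\mathbb{R}^{N_0\times N}$ a given data matrix, and $\lambda_1,\lambda_2,\beta>0$ given parameters. For a real vector $y$, $(y)_+=\max\{y,0\}$ componentwise; $e$ denotes the all-ones vector of $\mathbb{R}^{N_1}$. For a matrix $Y$, $\|Y\|_F$ is the Frobenius norm and $\|Y\|_1$ the maximum absolute column sum. The variable is $z=(\mathrm{vec}(W)^\top,b^\top,\mathrm{vec}(V)^\top)^\top\in\mathbb{R}^{N_2}$, $N_2=N_0N_1+N_1+N_0+N_1N$, where $W\in\mathbb{R}^{N_1\times N_0}$, $b=(b_1^\top,b_2^\top)^\top$ with $b_1\in\mathbb{R}^{N_1}$, $b_2\in\mathbb{R}^{N_0}$, $V=(v_1,\ldots,v_N)\in\mathbb{R}^{N_1\times N}$, and vec is columnwise vectorization. Define $\mathcal{F}(z)=\frac1N\sum_{n=1}^N\|(W^\top v_n+b_2)_+-x_n\|_2^2$, $\mathcal{R}(z)=\lambda_1\sum_{n=1}^N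 e^\top v_n+\lambda_2\|W\|_F^2$, $\mathcal{P}(z)=\beta\sum_{n=1}^N e^\top(v_n-(Wx_n+b_1)_+)$, and $\mathcal{O}=\mathcal{F}+\mathcal{R}+\mathcal{P}$. Let $\Omega_2=\{z: v_n\ge (Wx_n+b_1)_+,\ n=1,\ldots,N\}$. Fix $\theta>\frac1N\|X\|_F^2$ and set $\alpha=\max\left\{\frac{\theta}{\lambda_1}+\sqrt{\frac{N_1N_0\theta}{\lambda_2}}\|X\|_1,\ \frac{\theta\sqrt{N_1N_0\theta}}{\lambda_1\sqrt{\lambda_2}}+\sqrt{N\theta}+\|X\|_1\right\}$. Let $\Omega_3=\{z:\|b\|_\infty\le\alpha\}$, $\mathcal{Z}=\Omega_2\cap\Omega_3$, $\Omega_\theta=\{z\in\Omega_2:\mathcal{O}(z)\le\theta\}$, and $\mathrm{Proj}_{\Omega_3}$ the Euclidean projection onto the convex set $\Omega_3$. Problem (RP) is: minimize $\mathcal{O}(z)$ subject to $z\in\Omega_2$. Problem (LRP) is: minimize $\mathcal{O}(z)$ subject to $z\in\mathcal{Z}$. *)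

From HB Require Import structures.
From mathcomp Require Import all_boot all_order all_algebra.
From mathcomp Require Import reals.
Set Implicit Arguments. Unset Strict Implicit. Unset Printing Implicit Defensive.
Import Order.TTheory GRing.Theory Num.Theory.
Local Open Scope ring_scope.

Section Defs.
Variables (R : realType) (N0 N1 N : nat).

(* z = (W, b1, b2, V); b = (b1; b2) *)
Definition zT : Type :=
  ('M[R]_(N1, N0) * 'cV[R]_N1 * 'cV[R]_N0 * 'M[R]_(N1, N))%type.

Definition zW (z : zT) : 'M[R]_(N1, N0) := z.1.1.1.
Definition zb1 (z : zT) : 'cV[R]_N1 := z.1.1.2.
Definition zb2 (z : zT) : 'cV[R]_N0 := z.1.2.
Definition zV (z : zT) : 'M[R]_(N1, N) := z.2.

Definition pospart m n (A : 'M[R]_(m, n)) : 'M[R]_(m, n) :=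
  map_mx (fun t => Num.max t 0) A.

Definition frob2 m n (A : 'M[R]_(m, n)) : R :=
  \sum_(i < m) \sum_(j < n) A i j ^+ 2.

Definition norm1 m n (A : 'M[R]_(m, n)) : R :=
  \big[Num.max/0]_(j < n) \sum_(i < m) `|A i j|.

Definition norminf m (v : 'cV[R]_m) : R :=
  \big[Num.max/0]_(i < m) `|v i 0|.

Definition binf (z : zT) : R := Num.max (norminf (zb1 z)) (norminf (zb2 z)).

Definition bposinf (z : zT) : R :=
  Num.max (norminf (pospart (zb1 z))) (norminf (pospart (zb2 z))).

Definition dist2 (z y : zT) : R :=
  frob2 (zW z - zW y) + frob2 (zb1 z - zb1 y) + frob2 (zb2 z - zb2 y)
  + frob2 (zV z - zV y).

Variables (X : 'M[R]_(N0, N)) (lam1 lam2 beta : R).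

Definition objF (z : zT) : R :=
  N%:R^-1 * \sum_(n < N)
     frob2 (pospart ((zW z)^T *m col n (zV z) + zb2 z) - col n X).

Definition objR (z : zT) : R :=
  lam1 * (\sum_(n < N) \sum_(i < N1) zV z i n) + lam2 * frob2 (zW z).

Definition objP (z : zT) : R :=
  beta * \sum_(n < N) \sum_(i < N1)
     (zV z i n - pospart (zW z *m col n X + zb1 z) i 0).

Definition objO (z : zT) : R := objF z + objR z + objP z.

Definition Omega2 (z : zT) : Prop :=
  forall (n : 'I_N) (i : 'I_N1),
    pospart (zW z *m col n X + zb1 z) i 0 <= zV z i n.

Definition Omega3 (alpha : R) (z : zT) : Prop := binf z <= alpha.

Definition Zset (alpha : R) (z : zT) : Prop := Omega2 z /\ Omega3 alpha z.

Definition Omega_theta (theta : R) (z : zT) : Prop :=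
  Omega2 z /\ objO z <= theta.

Definition alpha_of (theta : R) : R :=
  Num.max (theta / lam1 + Num.sqrt ((N1 * N0)%:R * theta / lam2) * norm1 X)
          (theta * Num.sqrt ((N1 * N0)%:R * theta) / (lam1 * Num.sqrt lam2)
             + Num.sqrt (N%:R * theta) + norm1 X).

Definition is_proj_Omega3 (alpha : R) (z zbar : zT) : Prop :=
  Omega3 alpha zbar /\ forall y, Omega3 alpha y -> dist2 z zbar <= dist2 z y.

Definition LRP_minimizer (alpha : R) (z : zT) : Prop :=
  Zset alpha z /\ forall y, Zset alpha y -> objO z <= objO y.

Definition RP_minimizer (z : zT) : Prop :=
  Omega2 z /\ forall y, Omega2 y -> objO z <= objO y.

End Defs.

From HB Require Import structures.
From mathcomp Require Import all_boot all_order all_algebra.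
From mathcomp Require Import reals.
From mathcomp Require Import all_classical all_reals all_analysis.
From mathcomp Require Import lra.
Set Implicit Arguments. Unset Strict Implicit. Unset Printing Implicit Defensive.
Import Order.TTheory GRing.Theory Num.Theory.
Import numFieldNormedType.Exports.
Local Open Scope classical_set_scope.
Local Open Scope ring_scope.

(* On Omega2 every term of O is nonnegative, so on Omega_theta
   lam1 * sum_n e^T v_n + lam2 * ||W||_F^2 <= theta.  This bounds the entries of W
   by sqrt (theta / lam2) and those of V by theta / lam1, hence the entries of the
   pre-activations W x_n and W^T v_n by alpha.  The constraint v_n >= (W x_n + b1)_+
   then bounds b1 from above, and the fidelity bound F <= theta bounds b2 from above;
   so clamping b to [-alpha, alpha], which is the projection onto Omega3, leaves
   every ReLU unchanged: it keeps z in Omega2 and keeps O.  As O 0 = ||X||_F^2 / N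
   < theta, minimizing over Zset amounts to minimizing the continuous O over the
   bounded closed set Zset /\ {O <= theta}, which gives existence and boundedness;
   and every y in Omega2 with O y <= theta clamps into Zset with the same value, so
   minimizers of (LRP) also minimize (RP). *)

Section Scalars.
Variable R : realType.

Definition clamp (a t : R) : R := Num.min (Num.max t (- a)) a.

Lemma clamp_norm_le a t : 0 <= a -> `|clamp a t| <= a.
Proof.
move=> ?; rewrite /clamp ler_norml /Order.min /Order.max.
by case: (ltP t (- a)) => ?; case: ltP => ?; apply/andP; split; lra.
Qed.

Lemma relu_addr_clamp a u b : `|u| <= a -> b <= a ->
  Num.max (u + clamp a b) 0 = Num.max (u + b) 0.
Proof.
rewrite ler_norml => /andP[? ?] ?; rewrite /clamp /Order.min /Order.max.
by case: (ltP b (- a)) => ?; case: (ltP _ a) => ?; repeat case: ltP => ?; lra.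
Qed.

Lemma clamp_proj_ineq a b y : `|y| <= a ->
  (b - clamp a b) ^+ 2 + (clamp a b - y) ^+ 2 <= (b - y) ^+ 2.
Proof.
rewrite ler_norml => /andP[? ?]; rewrite /clamp /Order.min /Order.max.
by case: (ltP b (- a)) => ?; case: ltP => ?; nra.
Qed.

Lemma relu_le_shift (u b c d : R) : `|u| <= d -> Num.max (u + b) 0 <= c ->
  Num.max b 0 <= c + d.
Proof. by rewrite ler_norml => /andP[? ?]; rewrite !ge_max => /andP[? ?]; lra. Qed.

Lemma ler_sum_term (I : finType) (F : I -> R) j :
  (forall i, 0 <= F i) -> F j <= \sum_i F i.
Proof. by move=> F0; rewrite (bigD1 j) //= lerDl sumr_ge0. Qed.

End Scalars.

Section MatrixNorms.
Variable R : realType.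
Implicit Types m n : nat.

Lemma frob2_ge0 m n (A : 'M[R]_(m, n)) : 0 <= frob2 A.
Proof. by apply: sumr_ge0 => i _; apply: sumr_ge0 => j _; exact: sqr_ge0. Qed.

Lemma frob2_entry_le m n (A : 'M[R]_(m, n)) i j : A i j ^+ 2 <= frob2 A.
Proof.
have row_ge0 k : 0 <= \sum_l A k l ^+ 2 by apply: sumr_ge0 => l _; exact: sqr_ge0.
apply: le_trans _ (ler_sum_term (F := fun k => \sum_l A k l ^+ 2) i row_ge0).
exact: (ler_sum_term (F := fun l => A i l ^+ 2) j (fun l => sqr_ge0 _)).
Qed.

Lemma frob2_entry_bound m n (A : 'M[R]_(m, n)) c i j :
  frob2 A <= c -> `|A i j| <= Num.sqrt c.
Proof.
by move=> Ac; rewrite -sqrtr_sqr ler_wsqrtr // (le_trans (frob2_entry_le A i j)).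
Qed.

Lemma frob2_le_entrywise m n (A : 'M[R]_(m, n)) B :
  (forall i j, `|A i j| <= B) -> frob2 A <= (m * n)%:R * B ^+ 2.
Proof.
move=> AB; apply: (@le_trans _ _ (\sum_(i < m) \sum_(j < n) B ^+ 2)).
  apply: ler_sum => i _; apply: ler_sum => j _.
  by have := AB i j; rewrite ler_norml => /andP[? ?]; nra.
by rewrite !sumr_const !card_ord -mulrnA mulnC mulr_natl.
Qed.

Lemma frob2N m n (A : 'M[R]_(m, n)) : frob2 (- A) = frob2 A.
Proof. by apply: eq_bigr => i _; apply: eq_bigr => j _; rewrite mxE sqrrN. Qed.

Lemma frob2_col m n (A : 'M[R]_(m, n)) : \sum_(j < n) frob2 (col j A) = frob2 A.
Proof.
rewrite /frob2 exchange_big; apply: eq_bigr => i _; apply: eq_bigr => j _.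
by rewrite big_ord1 mxE.
Qed.

Lemma frob2_le0 m n (A : 'M[R]_(m, n)) : frob2 A <= 0 -> A = 0.
Proof.
move=> A0; apply/matrixP => i j; rewrite mxE.
have : A i j ^+ 2 = 0.
  by apply/le_anti; rewrite sqr_ge0 andbT (le_trans (frob2_entry_le A i j)).
by move/eqP; rewrite sqrf_eq0 => /eqP.
Qed.

Lemma frob2_split_le m n (A C Y : 'M[R]_(m, n)) :
  (forall i j, (A i j - C i j) ^+ 2 + (C i j - Y i j) ^+ 2 <= (A i j - Y i j) ^+ 2) ->
  frob2 (A - C) + frob2 (C - Y) <= frob2 (A - Y).
Proof.
move=> ACY; rewrite /frob2 -big_split; apply: ler_sum => i _.
by rewrite -big_split; apply: ler_sum => j _; rewrite !mxE; exact: ACY.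
Qed.

Lemma norminf_le m (v : 'cV[R]_m) a :
  0 <= a -> (forall i, `|v i 0| <= a) -> norminf v <= a.
Proof. by move=> a0 va; apply: bigmax_le. Qed.

Lemma norminf_entry_le m (v : 'cV[R]_m) i : `|v i 0| <= norminf v.
Proof. exact: (le_bigmax _ (fun i => `|v i 0|)). Qed.

Lemma norm1_ge0 m n (A : 'M[R]_(m, n)) : 0 <= norm1 A.
Proof.
rewrite /norm1; elim/big_ind: _ => [//|x y x0 _|j _]; first by rewrite le_max x0.
exact: sumr_ge0.
Qed.

Lemma norm1_col_le m n (A : 'M[R]_(m, n)) j : \sum_i `|A i j| <= norm1 A.
Proof. exact: (le_bigmax _ (fun j => \sum_i `|A i j|)). Qed.

Lemma normr_entry_le_norm1 m n (A : 'M[R]_(m, n)) i j : `|A i j| <= norm1 A.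
Proof.
apply: le_trans _ (norm1_col_le A j).
exact: (ler_sum_term (F := fun k => `|A k j|) i (fun k => normr_ge0 _)).
Qed.

Lemma mulmx_entry_le m n p (A : 'M[R]_(m, n)) (B : 'M[R]_(n, p)) s i j :
  (forall k, `|A i k| <= s) -> `|(A *m B) i j| <= s * \sum_k `|B k j|.
Proof.
move=> As; rewrite mxE mulr_sumr; apply: le_trans (ler_norm_sum _ _ _) _.
by apply: ler_sum => k _; rewrite normrM ler_wpM2r.
Qed.

Lemma pospart_ge0 m n (A : 'M[R]_(m, n)) i j : 0 <= pospart A i j.
Proof. by rewrite mxE le_max lexx orbT. Qed.

Lemma pospart0 m n : pospart (0 : 'M[R]_(m, n)) = 0.
Proof. by apply/matrixP => i j; rewrite !mxE maxxx. Qed.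

Lemma pospart_addr_clamp m (u b : 'cV[R]_m) a :
  (forall i, `|u i 0| <= a) -> (forall i, b i 0 <= a) ->
  pospart (u + map_mx (clamp a) b) = pospart (u + b).
Proof.
by move=> ua ba; apply/matrixP => i j; rewrite (ord1 j) !mxE relu_addr_clamp.
Qed.

End MatrixNorms.

Section Continuity.
Variables (R : realType) (T : topologicalType).
Implicit Types f g : T -> R.

Lemma continuous_addr f g :
  continuous f -> continuous g -> continuous (fun t => f t + g t).
Proof. by move=> cf cg t; exact: (@continuousD R R^o T f g t (cf t) (cg t)). Qed.

Lemma continuous_oppr f : continuous f -> continuous (fun t => - f t).
Proof. by move=> cf t; exact: (@continuousN R R^o T f t (cf t)). Qed.

Lemma continuous_mulr f g :
  continuous f -> continuous g -> continuous (fun t => f t * g t).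
Proof. by move=> cf cg t; exact: (continuousM (cf t) (cg t)). Qed.

Lemma continuous_maxr f g :
  continuous f -> continuous g -> continuous (fun t => Num.max (f t) (g t)).
Proof. by move=> cf cg t; exact: (continuous_max (cf t) (cg t)). Qed.

Lemma continuous_normr f : continuous f -> continuous (fun t => `|f t|).
Proof. by move=> cf t; apply: continuous_comp (cf t) (@norm_continuous _ R^o _). Qed.

Lemma continuous_sumr n (F : 'I_n -> T -> R) :
  (forall i, continuous (F i)) -> continuous (fun t => \sum_(i < n) F i t).
Proof. by move=> cF; apply: continuous_big => //; exact: add_continuous. Qed.

Lemma continuous_bigmaxr n (F : 'I_n -> T -> R) :
  (forall i, continuous (F i)) ->
  continuous (fun t => \big[Num.max/0]_(i < n) F i t).
Proof. by move=> cF; apply: continuous_big => //; exact: max_continuous. Qed.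

Lemma closed_le_continuous f g :
  continuous f -> continuous g -> closed [set t | f t <= g t].
Proof.
move=> cf cg.
have -> : [set t | f t <= g t] = (fun t => g t - f t) @^-1` [set x | 0 <= x].
  by apply/seteqP; split => t /=; rewrite subr_ge0.
apply: preimage_closed; last exact: closed_ge.
by move=> t _; apply: continuous_addr => //; exact: continuous_oppr.
Qed.

Lemma closed_forall (I : Type) (P : I -> set T) :
  (forall i, closed (P i)) -> closed [set t | forall i, P i t].
Proof.
move=> cP; have -> : [set t | forall i, P i t] = \bigcap_(i in setT) P i.
  by apply/seteqP; split => t /= Pt i => [_|]; exact: Pt.
by apply: closed_bigI => i _; exact: cP.
Qed.

Definition entrywise_continuous m n (F : T -> 'M[R]_(m, n)) :=
  forall i j, continuous (fun t => F t i j).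

Lemma entrywise_continuous_cst m n (A : 'M[R]_(m, n)) :
  entrywise_continuous (fun _ => A).
Proof. by move=> i j; exact: cst_continuous. Qed.

Lemma entrywise_continuousD m n (F G : T -> 'M[R]_(m, n)) :
  entrywise_continuous F -> entrywise_continuous G ->
  entrywise_continuous (fun t => F t + G t).
Proof. by move=> cF cG i j; under eq_fun do rewrite mxE; exact: continuous_addr. Qed.

Lemma entrywise_continuousB m n (F G : T -> 'M[R]_(m, n)) :
  entrywise_continuous F -> entrywise_continuous G ->
  entrywise_continuous (fun t => F t - G t).
Proof.
move=> cF cG i j; under eq_fun do rewrite !mxE.
by apply: continuous_addr => //; exact: continuous_oppr.
Qed.

Lemma entrywise_continuous_tr m n (F : T -> 'M[R]_(m, n)) :
  entrywise_continuous F -> entrywise_continuous (fun t => (F t)^T).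
Proof. by move=> cF i j; under eq_fun do rewrite mxE; exact: cF. Qed.

Lemma entrywise_continuous_col m n (F : T -> 'M[R]_(m, n)) k :
  entrywise_continuous F -> entrywise_continuous (fun t => col k (F t)).
Proof. by move=> cF i j; under eq_fun do rewrite mxE; exact: cF. Qed.

Lemma entrywise_continuous_mulmx m n p (F : T -> 'M[R]_(m, n)) (G : T -> 'M[R]_(n, p)) :
  entrywise_continuous F -> entrywise_continuous G ->
  entrywise_continuous (fun t => F t *m G t).
Proof.
move=> cF cG i j; under eq_fun do rewrite mxE.
by apply: continuous_sumr => k; exact: continuous_mulr.
Qed.

Lemma entrywise_continuous_pospart m n (F : T -> 'M[R]_(m, n)) :
  entrywise_continuous F -> entrywise_continuous (fun t => pospart (F t)).
Proof.
move=> cF i j; under eq_fun do rewrite mxE.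
by apply: continuous_maxr => //; exact: cst_continuous.
Qed.

Lemma continuous_frob2 m n (F : T -> 'M[R]_(m, n)) :
  entrywise_continuous F -> continuous (fun t => frob2 (F t)).
Proof.
move=> cF; apply: continuous_sumr => i; apply: continuous_sumr => j.
by under eq_fun do rewrite expr2; exact: continuous_mulr.
Qed.

Lemma continuous_norminf m (F : T -> 'cV[R]_m) :
  entrywise_continuous F -> continuous (fun t => norminf (F t)).
Proof. by move=> cF; apply: continuous_bigmaxr => i; exact: continuous_normr. Qed.

End Continuity.

Section Vectorization.
Variables (R : realType) (N0 N1 N : nat).
Local Notation zT := (zT R N0 N1 N).
Local Notation N2 := (N1 * N0 + N1 + N0 + N1 * N)%N.

Definition vecz (z : zT) : 'rV[R]_N2 :=
  row_mx (row_mx (row_mx (mxvec (zW z)) (zb1 z)^T) (zb2 z)^T) (mxvec (zV z)).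

Definition unvecz (v : 'rV[R]_N2) : zT :=
  (vec_mx (lsubmx (lsubmx (lsubmx v))), (rsubmx (lsubmx (lsubmx v)))^T,
   (rsubmx (lsubmx v))^T, vec_mx (rsubmx v)).

Lemma veczK : cancel vecz unvecz.
Proof.
case=> [[[W b1] b2] V].
by rewrite /unvecz /vecz /zW /zb1 /zb2 /zV /= !row_mxKl !row_mxKr !mxvecK !trmxK.
Qed.

Lemma unveczK : cancel unvecz vecz.
Proof.
move=> v; rewrite /vecz /unvecz /zW /zb1 /zb2 /zV /=.
by rewrite vec_mxK !trmxK !hsubmxK vec_mxK hsubmxK.
Qed.

Lemma zT0E : [/\ zW (0 : zT) = 0, zb1 (0 : zT) = 0, zb2 (0 : zT) = 0 & zV (0 : zT) = 0].
Proof. by []. Qed.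

Lemma entrywise_continuous_unvecz :
  [/\ entrywise_continuous (fun v => zW (unvecz v)),
      entrywise_continuous (fun v => zb1 (unvecz v)),
      entrywise_continuous (fun v => zb2 (unvecz v)) &
      entrywise_continuous (fun v => zV (unvecz v))].
Proof. by split=> i j; under eq_fun do rewrite !mxE; exact: coord_continuous. Qed.

Lemma row_mx_entry_le m n (A : 'rV[R]_m) (C : 'rV[R]_n) B :
  (forall k, `|A ord0 k| <= B) -> (forall k, `|C ord0 k| <= B) ->
  forall k, `|row_mx A C ord0 k| <= B.
Proof. by move=> AB CB k; case: (split_ordP k) => l ->; rewrite ?row_mxEl ?row_mxEr. Qed.

Lemma mxvec_entry_le m n (A : 'M[R]_(m, n)) B :
  (forall i j, `|A i j| <= B) -> forall k, `|mxvec A ord0 k| <= B.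
Proof. by move=> AB k; case/mxvec_indexP: k => i j; rewrite mxvecE. Qed.

Lemma vecz_entry_le (z : zT) B :
  (forall i j, `|zW z i j| <= B) -> (forall i, `|zb1 z i 0| <= B) ->
  (forall i, `|zb2 z i 0| <= B) -> (forall i j, `|zV z i j| <= B) ->
  forall k, `|vecz z ord0 k| <= B.
Proof.
move=> WB b1B b2B VB; apply: row_mx_entry_le; last exact: mxvec_entry_le.
apply: row_mx_entry_le => [|k]; last by rewrite mxE.
by apply: row_mx_entry_le => [|k]; [exact: mxvec_entry_le | rewrite mxE].
Qed.

End Vectorization.

Lemma rV_coercive_min (R : realType) n (f : 'rV[R]_n -> R) (C : set 'rV[R]_n)
    v0 a B :
  continuous f -> closed C -> C v0 -> f v0 <= a ->
  (forall v, C v -> f v <= a -> forall i, `|v ord0 i| <= B) ->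
  exists2 c, C c & forall v, C v -> f c <= f v.
Proof.
move=> cf cC Cv0 fv0 CB.
pose K := C `&` [set v | f v <= a].
have closedK : closed K.
  by apply: closedI cC _; apply: closed_le_continuous => //; exact: cst_continuous.
have K_box : K `<=` [set v | forall i, `[- B, B]%classic (v ord0 i)].
  by move=> v [Cv fv] i; rewrite /= in_itv /= -ler_norml CB.
have cK : compact K := subclosed_compact closedK
  (rV_compact (fun=> @segment_compact _ (- B) B)) K_box.
have Kv0 : v0 \in K by rewrite inE.
have [c] := compact_EVT_min (ex_intro _ v0 (conj Cv0 fv0)) cK
  (continuous_subspaceT cf).
rewrite inE => -[Cc _] cmin; exists c => // v Cv.
have [fva|afv] := leP (f v) a; first by apply: cmin; rewrite inE.
by apply: le_trans (cmin _ Kv0) (le_trans fv0 (ltW afv)).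
Qed.

Section ObjectiveContinuity.
Variables (R : realType) (N0 N1 N : nat) (X : 'M[R]_(N0, N)) (lam1 lam2 beta : R).
Variables (T : topologicalType) (Z : T -> zT R N0 N1 N).
Hypotheses (cW : entrywise_continuous (fun t => zW (Z t)))
  (cb1 : entrywise_continuous (fun t => zb1 (Z t)))
  (cb2 : entrywise_continuous (fun t => zb2 (Z t)))
  (cV : entrywise_continuous (fun t => zV (Z t))).

Let entrywise_continuous_relu_Wx_b1 n :
  entrywise_continuous (fun t => pospart (zW (Z t) *m col n X + zb1 (Z t))).
Proof.
apply/entrywise_continuous_pospart/entrywise_continuousD => //.
exact/entrywise_continuous_mulmx/entrywise_continuous_cst.
Qed.

Lemma continuous_objO : continuous (fun t => objO X lam1 lam2 beta (Z t)).
Proof.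
rewrite /objO /objF /objR /objP.
apply: continuous_addr; first apply: continuous_addr.
- apply: continuous_mulr; first exact: cst_continuous.
  apply: continuous_sumr => n; apply/continuous_frob2/entrywise_continuousB.
    apply/entrywise_continuous_pospart/entrywise_continuousD => //.
    by apply: entrywise_continuous_mulmx; [exact: entrywise_continuous_tr|
                                           exact: entrywise_continuous_col].
  exact: entrywise_continuous_cst.
- apply: continuous_addr; apply: continuous_mulr; try exact: cst_continuous.
    by apply: continuous_sumr => n; apply: continuous_sumr => i; exact: cV.
  exact: continuous_frob2.
- apply: continuous_mulr; first exact: cst_continuous.
  apply: continuous_sumr => n; apply: continuous_sumr => i.
  apply: continuous_addr; first exact: cV.
  exact/continuous_oppr/entrywise_continuous_relu_Wx_b1.
Qed.

Lemma closed_Zset a : closed [set t | Zset X a (Z t)].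
Proof.
apply: (@closedI _ [set t | Omega2 X (Z t)] [set t | Omega3 a (Z t)]).
  apply: closed_forall => n; apply: closed_forall => i.
  by apply: closed_le_continuous; [exact: entrywise_continuous_relu_Wx_b1|exact: cV].
apply: closed_le_continuous; last exact: cst_continuous.
by apply: continuous_maxr; exact: continuous_norminf.
Qed.

End ObjectiveContinuity.

Section ProjectionOmega3.
Variables (R : realType) (N0 N1 N : nat) (a : R).
Local Notation zT := (zT R N0 N1 N).

Definition clampz (z : zT) : zT :=
  (zW z, map_mx (clamp a) (zb1 z), map_mx (clamp a) (zb2 z), zV z).

Lemma Omega3_b1 (y : zT) i : Omega3 a y -> `|zb1 y i 0| <= a.
Proof.
move=> y3; apply: le_trans (norminf_entry_le _ i) (le_trans _ y3).
by rewrite le_max lexx.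
Qed.

Lemma Omega3_b2 (y : zT) i : Omega3 a y -> `|zb2 y i 0| <= a.
Proof.
move=> y3; apply: le_trans (norminf_entry_le _ i) (le_trans _ y3).
by rewrite le_max lexx orbT.
Qed.

Lemma Omega3_clampz (z : zT) : 0 <= a -> Omega3 a (clampz z).
Proof.
move=> a0; rewrite /Omega3 /binf ge_max.
by apply/andP; split; apply: norminf_le => // i; rewrite mxE clamp_norm_le.
Qed.

Lemma dist2_le0 (z y : zT) : dist2 z y <= 0 -> z = y.
Proof.
have eq_of m n (A B : 'M[R]_(m, n)) : frob2 (A - B) <= 0 -> A = B.
  by move/frob2_le0/eqP; rewrite subr_eq0 => /eqP.
case: z y => [[[W b1] b2] V] [[[W' b1'] b2'] V'] d0.
have := frob2_ge0 (W - W'); have := frob2_ge0 (b1 - b1').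
have := frob2_ge0 (b2 - b2'); have := frob2_ge0 (V - V').
by move: d0; rewrite /dist2 /= => *; congr (_, _, _, _); apply: eq_of; lra.
Qed.

Lemma dist2_clampz_le (z y : zT) : Omega3 a y ->
  dist2 z (clampz z) + dist2 (clampz z) y <= dist2 z y.
Proof.
move=> y3.
have keep m n (A Y : 'M[R]_(m, n)) : frob2 (A - A) + frob2 (A - Y) <= frob2 (A - Y).
  by apply: frob2_split_le => i j; rewrite subrr expr0n add0r.
have clamp_le m (b c : 'cV[R]_m) : (forall i, `|c i 0| <= a) ->
    frob2 (b - map_mx (clamp a) b) + frob2 (map_mx (clamp a) b - c) <= frob2 (b - c).
  by move=> ca; apply: frob2_split_le => i j; rewrite mxE (ord1 j) clamp_proj_ineq.
have := keep _ _ (zW z) (zW y); have := keep _ _ (zV z) (zV y).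
have := clamp_le _ (zb1 z) (zb1 y) (fun i => Omega3_b1 i y3).
have := clamp_le _ (zb2 z) (zb2 y) (fun i => Omega3_b2 i y3).
by rewrite /dist2 /=; lra.
Qed.

Lemma proj_Omega3_clampz (z zbar : zT) : 0 <= a ->
  is_proj_Omega3 a z zbar -> zbar = clampz z.
Proof.
move=> a0 [zbar3 zbar_min]; apply/esym/dist2_le0.
have := zbar_min _ (Omega3_clampz z a0); have := dist2_clampz_le z zbar3; lra.
Qed.

End ProjectionOmega3.

Section BoundedReformulation.
Variables (R : realType) (N0 N1 N : nat) (X : 'M[R]_(N0, N)).
Variables (lam1 lam2 beta theta : R).
Hypotheses (N_gt0 : (0 < N)%N) (N0_gt0 : (0 < N0)%N) (N1_gt0 : (0 < N1)%N).
Hypotheses (lam1_gt0 : 0 < lam1) (lam2_gt0 : 0 < lam2) (beta_gt0 : 0 < beta).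
Hypothesis theta_gt : N%:R^-1 * frob2 X < theta.

Local Notation zT := (zT R N0 N1 N).
Local Notation O := (objO X lam1 lam2 beta).
Local Notation Omega_theta := (Omega_theta X lam1 lam2 beta theta).
Local Notation alpha := (alpha_of N1 X lam1 lam2 theta).
Local Notation sW := (Num.sqrt (theta / lam2)).
Local Notation unvec := (@unvecz R N0 N1 N).

Lemma theta_gt0 : 0 < theta.
Proof. by apply: le_lt_trans theta_gt; rewrite mulr_ge0 ?invr_ge0 ?frob2_ge0. Qed.

Lemma theta_lam1_ge0 : 0 <= theta / lam1.
Proof. by rewrite divr_ge0 ?ltW ?theta_gt0. Qed.

Lemma zV_ge0 (z : zT) i n : Omega2 X z -> 0 <= zV z i n.
Proof. by move=> z2; apply: le_trans _ (z2 n i); exact: pospart_ge0. Qed.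

Lemma objF_ge0 (z : zT) : 0 <= objF X z.
Proof. by rewrite mulr_ge0 ?invr_ge0 // sumr_ge0 // => n _; exact: frob2_ge0. Qed.

Lemma objR_ge0 (z : zT) : Omega2 X z -> 0 <= objR lam1 lam2 z.
Proof.
move=> z2; apply: addr_ge0; apply: mulr_ge0;
  rewrite ?frob2_ge0 ?(ltW lam1_gt0) ?(ltW lam2_gt0) //.
by do 2 (apply: sumr_ge0 => ? _); exact: zV_ge0.
Qed.

Lemma objP_ge0 (z : zT) : Omega2 X z -> 0 <= objP X beta z.
Proof.
move=> z2; apply: mulr_ge0; first exact: ltW.
by do 2 (apply: sumr_ge0 => ? _); rewrite subr_ge0; exact: z2.
Qed.

Lemma objF_le (z : zT) : Omega_theta z -> objF X z <= theta.
Proof.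
case=> z2 zO; apply: le_trans _ zO.
by rewrite /objO -addrA lerDl addr_ge0 ?objR_ge0 ?objP_ge0.
Qed.

Lemma objR_le (z : zT) : Omega_theta z -> objR lam1 lam2 z <= theta.
Proof.
case=> z2 zO; apply: le_trans _ zO; rewrite /objO.
by have := objF_ge0 z; have := objP_ge0 z2; lra.
Qed.

Lemma frob2_zW_le (z : zT) : Omega_theta z -> frob2 (zW z) <= theta / lam2.
Proof.
move=> zt; have := objR_le zt; rewrite /objR ler_pdivlMr // mulrC.
have : 0 <= lam1 * \sum_(n < N) \sum_(i < N1) zV z i n.
  rewrite mulr_ge0 ?(ltW lam1_gt0) //.
  by do 2 (apply: sumr_ge0 => ? _); exact: zV_ge0 zt.1.
lra.
Qed.

Lemma sum_zV_le (z : zT) : Omega_theta z ->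
  \sum_(n < N) \sum_(i < N1) zV z i n <= theta / lam1.
Proof.
move=> zt; have := objR_le zt; rewrite /objR ler_pdivlMr // mulrC.
have : 0 <= lam2 * frob2 (zW z) by rewrite mulr_ge0 ?(ltW lam2_gt0) ?frob2_ge0.
lra.
Qed.

Lemma colsum_zV_le (z : zT) n : Omega_theta z -> \sum_i zV z i n <= theta / lam1.
Proof.
move=> zt; apply: le_trans _ (sum_zV_le zt).
apply: (ler_sum_term (F := fun n => \sum_i zV z i n)) => k.
by apply: sumr_ge0 => i _; exact: zV_ge0 zt.1.
Qed.

Lemma zV_le (z : zT) i n : Omega_theta z -> zV z i n <= theta / lam1.
Proof.
move=> zt; apply: le_trans _ (colsum_zV_le n zt).
by apply: (ler_sum_term (F := fun i => zV z i n)) => k; exact: zV_ge0 zt.1.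
Qed.

Lemma norm1_zV_le (z : zT) : Omega_theta z -> norm1 (zV z) <= theta / lam1.
Proof.
move=> zt; apply: bigmax_le => [|n _]; first exact: theta_lam1_ge0.
apply: le_trans _ (colsum_zV_le n zt); apply: ler_sum => i _.
by rewrite ger0_norm //; exact: zV_ge0 zt.1.
Qed.

Lemma zW_entry_le (z : zT) i j : Omega_theta z -> `|zW z i j| <= sW.
Proof. by move=> zt; apply/frob2_entry_bound/frob2_zW_le. Qed.

Lemma Wx_le (z : zT) n i : Omega_theta z ->
  `|(zW z *m col n X) i 0| <= sW * norm1 X.
Proof.
move=> zt; apply: le_trans (mulmx_entry_le (col n X) 0 (fun k => zW_entry_le i k zt)) _.
apply: ler_wpM2l; first exact: sqrtr_ge0.
by under eq_bigr do rewrite mxE; exact: norm1_col_le.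
Qed.

Lemma WTv_le (z : zT) n j : Omega_theta z ->
  `|((zW z)^T *m col n (zV z)) j 0| <= sW * (theta / lam1).
Proof.
move=> zt; have Wt k : `|(zW z)^T j k| <= sW by rewrite mxE zW_entry_le.
apply: le_trans (mulmx_entry_le (col n (zV z)) 0 Wt) _.
apply: ler_wpM2l; first exact: sqrtr_ge0.
apply: le_trans _ (colsum_zV_le n zt); apply: ler_sum => i _.
by rewrite mxE ger0_norm //; exact: zV_ge0 zt.1.
Qed.

Lemma relu_WTv_b2_le (z : zT) n j : Omega_theta z ->
  pospart ((zW z)^T *m col n (zV z) + zb2 z) j 0 <= X j n + Num.sqrt (N%:R * theta).
Proof.
move=> zt; pose M := pospart ((zW z)^T *m col n (zV z) + zb2 z) - col n X.
have N_pos : 0 < N%:R :> R by rewrite ltr0n.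
have fidelity : frob2 M <= N%:R * theta.
  rewrite -ler_pdivrMl //; apply: le_trans _ (objF_le zt); apply: ler_wpM2l.
    by rewrite invr_ge0 ltW.
  apply: (ler_sum_term (F := fun k =>
    frob2 (pospart ((zW z)^T *m col k (zV z) + zb2 z) - col k X))).
  by move=> k; exact: frob2_ge0.
have := frob2_entry_bound j 0 fidelity; rewrite /M !mxE ler_norml => /andP[_].
by rewrite lerBlDl.
Qed.

Lemma N1N0_ge1 : 1 <= (N1 * N0)%:R :> R.
Proof. by rewrite ler1n muln_gt0 N1_gt0 N0_gt0. Qed.

Lemma alpha_ge_b1 : theta / lam1 + sW * norm1 X <= alpha.
Proof.
rewrite le_max; apply/orP; left; rewrite lerD2l ler_wpM2r ?norm1_ge0 //.
rewrite ler_wsqrtr // -mulrA.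
have : 0 <= theta / lam2 by rewrite divr_ge0 ?ltW ?theta_gt0.
by have := N1N0_ge1; nra.
Qed.

Lemma alpha_ge_b2 : sW * (theta / lam1) + Num.sqrt (N%:R * theta) + norm1 X <= alpha.
Proof.
rewrite le_max; apply/orP; right; rewrite !lerD2r.
have th0 := ltW theta_gt0; have c1 := N1N0_ge1.
rewrite sqrtrM // sqrtrV ?(ltW lam2_gt0) // sqrtrM ?(le_trans _ c1) // invfM.
have sc1 : 1 <= Num.sqrt (N1 * N0)%:R :> R by rewrite -[leLHS]sqrtr1 ler_wsqrtr.
have : 0 <= theta * Num.sqrt theta * lam1^-1 * (Num.sqrt lam2)^-1.
  by rewrite !mulr_ge0 ?invr_ge0 ?sqrtr_ge0 ?(ltW lam1_gt0).
nra.
Qed.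

Lemma alpha_ge0 : 0 <= alpha.
Proof.
apply: le_trans _ alpha_ge_b1.
by rewrite addr_ge0 ?theta_lam1_ge0 ?mulr_ge0 ?sqrtr_ge0 ?norm1_ge0.
Qed.

Lemma Wx_le_alpha (z : zT) n i : Omega_theta z ->
  `|(zW z *m col n X) i 0| <= alpha.
Proof.
move=> zt; apply: le_trans (Wx_le n i zt) _; apply: le_trans _ alpha_ge_b1.
by rewrite lerDr theta_lam1_ge0.
Qed.

Lemma WTv_le_alpha (z : zT) n j : Omega_theta z ->
  `|((zW z)^T *m col n (zV z)) j 0| <= alpha.
Proof.
move=> zt; apply: le_trans (WTv_le n j zt) _; apply: le_trans _ alpha_ge_b2.
by rewrite -addrA lerDl addr_ge0 ?sqrtr_ge0 ?norm1_ge0.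
Qed.

Lemma relu_b1_le (z : zT) i : Omega_theta z -> Num.max (zb1 z i 0) 0 <= alpha.
Proof.
move=> zt; pose n0 := Ordinal N_gt0.
apply: le_trans _ alpha_ge_b1; apply: (relu_le_shift (Wx_le n0 i zt)).
by apply: le_trans _ (zV_le i n0 zt); have := zt.1 n0 i; rewrite !mxE.
Qed.

Lemma relu_b2_le (z : zT) j : Omega_theta z -> Num.max (zb2 z j 0) 0 <= alpha.
Proof.
move=> zt; pose n0 := Ordinal N_gt0.
apply: le_trans _ alpha_ge_b2; rewrite -addrA addrC.
apply: (relu_le_shift (WTv_le n0 j zt)).
have := relu_WTv_b2_le n0 j zt; rewrite !mxE => /le_trans; apply.
by rewrite [leRHS]addrC lerD2r (le_trans (ler_norm _) (normr_entry_le_norm1 X j n0)).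
Qed.

Lemma bposinf_le (z : zT) : Omega_theta z -> bposinf z <= alpha.
Proof.
move=> zt; rewrite /bposinf ge_max; apply/andP; split;
  apply: norminf_le alpha_ge0 _ => i; rewrite ger0_norm ?pospart_ge0 // mxE.
- exact: relu_b1_le.
- exact: relu_b2_le.
Qed.

Lemma relu_Wx_b1_clampz (z : zT) n : Omega_theta z ->
  pospart (zW (clampz alpha z) *m col n X + zb1 (clampz alpha z)) =
  pospart (zW z *m col n X + zb1 z).
Proof.
move=> zt; apply: pospart_addr_clamp => i; first exact: (Wx_le_alpha n i zt).
by have := relu_b1_le i zt; rewrite ge_max => /andP[].
Qed.

Lemma relu_WTv_b2_clampz (z : zT) n : Omega_theta z ->
  pospart ((zW (clampz alpha z))^T *m col n (zV (clampz alpha z))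
           + zb2 (clampz alpha z)) =
  pospart ((zW z)^T *m col n (zV z) + zb2 z).
Proof.
move=> zt; apply: pospart_addr_clamp => j; first exact: (WTv_le_alpha n j zt).
by have := relu_b2_le j zt; rewrite ge_max => /andP[].
Qed.

Lemma Omega2_clampz (z : zT) : Omega_theta z -> Omega2 X (clampz alpha z).
Proof. by move=> zt n i; rewrite relu_Wx_b1_clampz //; exact: zt.1. Qed.

Lemma objO_clampz (z : zT) : Omega_theta z -> O (clampz alpha z) = O z.
Proof.
move=> zt; rewrite /objO; congr (_ + _ + _).
  by rewrite /objF; congr (_ * _); apply: eq_bigr => n _; rewrite relu_WTv_b2_clampz.
by rewrite /objP; congr (_ * _); apply: eq_bigr => n _; rewrite relu_Wx_b1_clampz.
Qed.

Lemma proj_Omega3_Zset (z zbar : zT) : Omega_theta z ->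
  is_proj_Omega3 alpha z zbar -> Zset X alpha zbar /\ O zbar = O z.
Proof.
move=> zt zp; rewrite (proj_Omega3_clampz alpha_ge0 zp) objO_clampz //.
by split=> //; split; [exact: Omega2_clampz | exact: Omega3_clampz alpha_ge0].
Qed.

Lemma objO0 : O (0 : zT) = N%:R^-1 * frob2 X.
Proof.
rewrite /objO /objF /objR /objP; case: (zT0E R N0 N1 N) => -> -> -> ->.
rewrite trmx0; under eq_bigr do rewrite mul0mx addr0 pospart0 sub0r frob2N.
rewrite frob2_col -[RHS]addr0 -addrA; congr (_ + _).
rewrite /frob2 !big1 ?mulr0 ?addr0 // => *; rewrite big1 // => *.
all: by rewrite ?mul0mx ?addr0 ?pospart0 !mxE ?subrr ?expr0n.
Qed.

Lemma Zset0 : Zset X alpha (0 : zT).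
Proof.
have [W0 b10 _ V0] := zT0E R N0 N1 N.
split=> [n i|]; first by rewrite W0 b10 V0 mul0mx addr0 pospart0 !mxE.
rewrite /Omega3 /binf ge_max; apply/andP; split;
  by apply: norminf_le alpha_ge0 _ => i; rewrite mxE normr0 alpha_ge0.
Qed.

Lemma LRP_Omega_theta (z : zT) :
  LRP_minimizer X lam1 lam2 beta alpha z -> Omega_theta z.
Proof.
case=> -[z2 _] zmin; split=> //.
by apply: ltW (le_lt_trans (zmin _ Zset0) _); rewrite objO0.
Qed.

Lemma LRP_RP (z : zT) :
  LRP_minimizer X lam1 lam2 beta alpha z -> RP_minimizer X lam1 lam2 beta z.
Proof.
move=> zLRP; have [z2 zt] := LRP_Omega_theta zLRP; split=> // y y2.
have [yt|ty] := leP (O y) theta; last exact: le_trans zt (ltW ty).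
have yt' : Omega_theta y by [].
rewrite -(objO_clampz yt'); apply: zLRP.2.
by split; [exact: Omega2_clampz | exact: Omega3_clampz alpha_ge0].
Qed.

Local Notation box := (sW + alpha + theta / lam1).

Lemma sublevel_entry_le (z : zT) : Zset X alpha z -> O z <= theta ->
  [/\ forall i j, `|zW z i j| <= box, forall i, `|zb1 z i 0| <= box,
      forall i, `|zb2 z i 0| <= box & forall i j, `|zV z i j| <= box].
Proof.
case=> z2 z3 zO; have zt : Omega_theta z by [].
have s0 := sqrtr_ge0 (theta / lam2); have a0 := alpha_ge0.
have t0 := theta_lam1_ge0; split=> [i j|i|i|i j].
- by apply: le_trans (zW_entry_le i j zt) _; lra.
- by apply: le_trans (Omega3_b1 i z3) _; lra.
- by apply: le_trans (Omega3_b2 i z3) _; lra.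
- by rewrite ger0_norm ?(zV_ge0 _ _ z2) //; apply: le_trans (zV_le i j zt) _; lra.
Qed.

Lemma LRP_bounded : exists M, forall z : zT,
  LRP_minimizer X lam1 lam2 beta alpha z -> dist2 z 0 <= M.
Proof.
exists (((N1 * N0)%:R + (N1 * 1)%:R + (N0 * 1)%:R + (N1 * N)%:R) * box ^+ 2).
move=> z zLRP; have [_ zt] := LRP_Omega_theta zLRP.
have [WB b1B b2B VB] := sublevel_entry_le zLRP.1 zt.
have col_le m (b : 'cV[R]_m) :
    (forall i, `|b i 0| <= box) -> forall i j, `|b i j| <= box.
  by move=> bB i j; rewrite (ord1 j).
rewrite /dist2; case: (zT0E R N0 N1 N) => -> -> -> ->; rewrite !subr0 !mulrDl.
by rewrite !lerD //; apply: frob2_le_entrywise => //; exact: col_le.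
Qed.

Lemma LRP_exists : exists z : zT, LRP_minimizer X lam1 lam2 beta alpha z.
Proof.
have [cW cb1 cb2 cV] := entrywise_continuous_unvecz R N0 N1 N.
have [c Zc cmin] : exists2 c, Zset X alpha (unvec c) &
    forall v, Zset X alpha (unvec v) -> O (unvec c) <= O (unvec v).
  apply: (@rV_coercive_min _ _ (fun v => O (unvec v)) [set v | Zset X alpha (unvec v)]
    (vecz (0 : zT)) theta box).
  - exact: continuous_objO.
  - exact: closed_Zset.
  - by rewrite /= veczK; exact: Zset0.
  - by rewrite veczK objO0 ltW.
  move=> v Zv Ov; rewrite -[v]unveczK.
  by case: (sublevel_entry_le Zv Ov); exact: vecz_entry_le.
exists (unvec c); split=> // y Zy.
by rewrite -(veczK y); apply: cmin; rewrite veczK.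
Qed.

End BoundedReformulation.

Theorem theorem2p1 (R : realType) (N0 N1 N : nat)
  (X : 'M[R]_(N0, N)) (lam1 lam2 beta theta : R) :
  (0 < N)%N -> (0 < N0)%N -> (0 < N1)%N ->
  0 < lam1 -> 0 < lam2 -> 0 < beta ->
  N%:R^-1 * frob2 X < theta ->
  let alpha := alpha_of N1 X lam1 lam2 theta in
  let O := objO X lam1 lam2 beta in
  (forall z : zT R N0 N1 N, Omega_theta X lam1 lam2 beta theta z ->
     [/\ frob2 (zW z) <= theta / lam2,
         norm1 (zV z) <= theta / lam1,
         bposinf z <= alpha &
         forall zbar : zT R N0 N1 N, is_proj_Omega3 alpha z zbar ->
           Zset X alpha zbar /\ O zbar = O z])
  /\ (exists z : zT R N0 N1 N, LRP_minimizer X lam1 lam2 beta alpha z)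
  /\ (exists M : R, forall z : zT R N0 N1 N, LRP_minimizer X lam1 lam2 beta alpha z ->
        dist2 z 0 <= M)
  /\ (forall z : zT R N0 N1 N, LRP_minimizer X lam1 lam2 beta alpha z ->
        RP_minimizer X lam1 lam2 beta z).
Proof.
move=> N_gt0 N0_gt0 N1_gt0 lam1_gt0 lam2_gt0 beta_gt0 theta_gt alpha O.
split; [|split; [|split]].
- move=> z zt; split.
  + exact: (frob2_zW_le lam1_gt0 lam2_gt0 beta_gt0 zt).
  + exact: (norm1_zV_le lam1_gt0 lam2_gt0 beta_gt0 theta_gt zt).
  + exact: (bposinf_le N_gt0 N0_gt0 N1_gt0 lam1_gt0 lam2_gt0 beta_gt0 theta_gt zt).
  + move=> zbar.
    exact: (proj_Omega3_Zset N_gt0 N0_gt0 N1_gt0 lam1_gt0 lam2_gt0 beta_gt0 theta_gt zt).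
- exact: (LRP_exists N0_gt0 N1_gt0 lam1_gt0 lam2_gt0 beta_gt0 theta_gt).
- exact: (LRP_bounded N0_gt0 N1_gt0 lam1_gt0 lam2_gt0 beta_gt0 theta_gt).
- move=> z.
  exact: (LRP_RP N_gt0 N0_gt0 N1_gt0 lam1_gt0 lam2_gt0 beta_gt0 theta_gt).
Qed.
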